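(* Let $j,k\ge 1$ be integers, $\beta,\gamma,\nu>0$, $R_0=\beta/\gamma>1$. For $\boldsymbol{y},\boldsymbol{\theta}\in\mathbb{R}^{j+k}$ define $$H_{j,k}(\boldsymbol{y},\boldsymbol{\theta})=\beta\Big(\sum_{m=j+1}^{j+k}y_m\Big)\Big(1-\sum_{m=1}^{j+k}y_m\Big)\big(e^{\theta_1}-1\big)+j\nu\sum_{m=1}^{j}y_m\big(e^{-\theta_m+\theta_{m+1}}-1\big)+k\gamma\sum_{m=j+1}^{j+k-1}y_m\big(e^{-\theta_m+\theta_{m+1}}-1\big)+k\gamma\,y_{j+k}\big(e^{-\theta_{j+k}}-1\big).$$ Define $\tilde S(\boldsymbol{\theta})=\ln\Big(\frac1k\sum_{m=j+1}^{j+k}e^{\theta_m}\Big)-\frac{\gamma}{\beta}\Big(1-\frac{k}{\sum_{m=j+1}^{j+k}e^{\theta_m}}\Big)$ (a function of $\theta_{j+1},\dots,\theta_{j+k}$ only). Let $\theta_k^*$ be the unique real solution of $\frac{\beta}{k\gamma}\sum_{m=1}^k e^{m\theta}=1$ and let $\boldsymbol{\theta}^*\in\mathbb{R}^{j+k}$ have $\theta^*_1=\dots=\theta^*_{j+1}=k\theta_k^*$ and $\theta^*_{j+i}=(k-i+1)\theta_k^*$ for $i=1,\dots,k$. Then: (i) for every $\boldsymbol{\theta}\in\mathbb{R}^{j+k}$ with $\theta_1=\theta_2=\cdots=\theta_{j+1}$, $H_{j,k}\big(\nabla\tilde S(\boldsymbol{\theta}),\boldsymbol{\theta}\big)=0$;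 (ii) $(\mathbf{0},\boldsymbol{\theta}^* )$ is an equilibrium point of the Hamiltonian system $dy_i/dt=\partial H_{j,k}/\partial\theta_i$, $d\theta_i/dt=-\partial H_{j,k}/\partial y_i$ ($i=1,\dots,j+k$); (iii) $\tilde S(\boldsymbol{\theta}^* )-\tilde S(\mathbf{0})=1-\frac1{R_0}-\ln R_0$.
   Context: $H_{j,k}$ is the Hamiltonian for an SEIS infection model with $j$ latent stages (each of mean duration $1/(j\nu)$) followed by $k$ infectious stages (each of mean duration $1/(k\gamma)$); $y_1,\dots,y_j$ correspond to latent stages and $y_{j+1},\dots,y_{j+k}$ to infectious stages, and $\theta_i$ is the momentum conjugate to $y_i$. $\nabla\tilde S$ denotes the gradient with respect to all $j+k$ components of $\boldsymbol\theta$. *)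

(* classical reals. Vectors in R^{j+k} are represented as
   functions nat -> R, using (1-based) indices 1..j+k; other indices unused. *)
From Stdlib Require Import Reals Lra Lia.
Open Scope R_scope.

Fixpoint sumR (n : nat) (f : nat -> R) : R :=
  match n with
  | O => 0
  | S n' => sumR n' f + f n'
  end.

(* ssum a b f = sum_{m=a}^{b} f m  (empty, i.e. 0, when b < a) *)
Definition ssum (a b : nat) (f : nat -> R) : R :=
  sumR (S b - a) (fun i => f (a + i)%nat).

Definition upd (f : nat -> R) (i : nat) (t : R) : nat -> R :=
  fun m => if Nat.eqb m i then t else f m.

Definition Ham (j k : nat) (beta gamma nu : R) (y th : nat -> R) : R :=
  beta * ssum (j + 1) (j + k) y * (1 - ssum 1 (j + k) y) * (exp (th 1%nat) - 1)
  + INR j * nu * ssum 1 j (fun m => y m * (exp (- th m + th (m + 1)%nat) - 1))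
  + INR k * gamma * ssum (j + 1) (j + k - 1)
                       (fun m => y m * (exp (- th m + th (m + 1)%nat) - 1))
  + INR k * gamma * y (j + k)%nat * (exp (- th (j + k)%nat) - 1).

Definition Stilde (j k : nat) (beta gamma : R) (th : nat -> R) : R :=
  ln (/ INR k * ssum (j + 1) (j + k) (fun m => exp (th m)))
  - gamma / beta * (1 - INR k / ssum (j + 1) (j + k) (fun m => exp (th m))).

(* theta^* built from theta_k^* = ts:
   theta^*_m = k ts for 1 <= m <= j+1, theta^*_{j+i} = (k-i+1) ts. *)
Definition theta_star (j k : nat) (ts : R) : nat -> R :=
  fun m => if Nat.leb m (j + 1) then INR k * ts else INR (j + k + 1 - m) * ts.

From Stdlib Require Import Reals Lra Lia.
From Coquelicot Require Import Coquelicot.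
Open Scope R_scope.

(* (i) The partial derivatives of S~ vanish in the latent coordinates and equal
   (c/A) e^{theta_m} in the infectious ones, where A = sum_m e^{theta_m} and
   1 - c = k gamma / (beta A).  Substituted into H, the infectious chain
   telescopes and H collapses to (c/A)(e^{theta_1} - 1)(beta A (1 - c) - k gamma) = 0.
   (ii) H vanishes identically at y = 0, and the only y-derivative that is not
   trivially zero is beta (e^{k theta*} - 1) + k gamma (e^{-theta*} - 1), which
   vanishes by the geometric sum (1 - e^{-t}) sum_{m=1}^k e^{m t} = e^{k t} - 1.
   (iii) At theta* the infectious exponential sum is sum_m e^{m theta*} = k gamma / beta,
   i.e. 1/R0 times its value k at 0. *)

Lemma sumR_ext n f g : (forall i, (i < n)%nat -> f i = g i) -> sumR n f = sumR n g.
Proof.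
  induction n as [|n IH]; intros H; simpl; [reflexivity|].
  rewrite IH by (intros; apply H; lia). rewrite H by lia. reflexivity.
Qed.

Lemma sumR_const n c : sumR n (fun _ => c) = INR n * c.
Proof. induction n as [|n IH]; simpl sumR; [simpl; ring|]. rewrite IH, S_INR; ring. Qed.

Lemma sumR_scal n c f : sumR n (fun i => c * f i) = c * sumR n f.
Proof. induction n as [|n IH]; simpl; [ring|]. rewrite IH; ring. Qed.

Lemma sumR_split n m f : sumR (n + m) f = sumR n f + sumR m (fun i => f (n + i)%nat).
Proof.
  induction m as [|m IH]; simpl; [rewrite Nat.add_0_r; ring|].
  rewrite Nat.add_succ_r; simpl. rewrite IH; ring.
Qed.

Lemma sumR_telescope n g : sumR n (fun i => g (S i) - g i) = g n - g O.
Proof. induction n as [|n IH]; simpl; [ring|]. rewrite IH; ring. Qed.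

Lemma sumR_pos n f : (0 < n)%nat -> (forall i, 0 < f i) -> 0 < sumR n f.
Proof.
  induction n as [|n IH]; intros Hn Hf; [lia|]. simpl.
  destruct n as [|n]; [simpl; specialize (Hf O); lra|].
  specialize (IH ltac:(lia) Hf). specialize (Hf (S n)). lra.
Qed.

Lemma sumR_upd n f p v : (p < n)%nat ->
  sumR n (fun i => if Nat.eqb i p then v else f i) = sumR n f - f p + v.
Proof.
  induction n as [|n IH]; intros Hp; [lia|]. simpl.
  destruct (Nat.eq_dec p n) as [->|Hne].
  - rewrite Nat.eqb_refl, (sumR_ext n _ f); [ring|].
    intros i Hi. destruct (Nat.eqb_spec i n); [lia|reflexivity].
  - rewrite IH by lia. destruct (Nat.eqb_spec n p); [lia|ring].
Qed.

Lemma sumR_single n f p : (forall l, (l < n)%nat -> l <> p -> f l = 0) ->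
  sumR n f = if Nat.ltb p n then f p else 0.
Proof.
  induction n as [|n IH]; intros H; simpl.
  - destruct (Nat.ltb_spec p 0); [lia|reflexivity].
  - rewrite IH by (intros; apply H; lia).
    destruct (Nat.ltb_spec p n), (Nat.ltb_spec p (S n)); try lia.
    + rewrite (H n) by lia; ring.
    + replace p with n by lia; ring.
    + rewrite (H n) by lia; ring.
Qed.

Lemma sumR_rev n f : sumR n f = sumR n (fun i => f (n - S i)%nat).
Proof.
  revert f; induction n as [|n IH]; intros f; [reflexivity|].
  change (S n) with (1 + n)%nat at 1. rewrite sumR_split, IH.
  simpl sumR at 3. replace (n - n)%nat with O by lia. simpl sumR at 1.
  rewrite (sumR_ext n (fun i => f (1 + (n - S i))%nat) (fun i => f (n - i)%nat)); [ring|].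
  intros i Hi. f_equal. lia.
Qed.

Lemma ssum_ext a b f g : (forall m, (a <= m <= b)%nat -> f m = g m) ->
  ssum a b f = ssum a b g.
Proof. intros H; unfold ssum; apply sumR_ext; intros; apply H; lia. Qed.

Lemma ssum_const a b c : ssum a b (fun _ => c) = INR (S b - a) * c.
Proof. unfold ssum. apply sumR_const. Qed.

Lemma ssum_scal a b c f : ssum a b (fun m => c * f m) = c * ssum a b f.
Proof. unfold ssum. apply sumR_scal. Qed.

Lemma ssum_split a b c f : (a <= b + 1)%nat -> (b <= c)%nat ->
  ssum a c f = ssum a b f + ssum (b + 1) c f.
Proof.
  intros Hab Hbc. unfold ssum.
  replace (S c - a)%nat with ((S b - a) + (S c - (b + 1)))%nat by lia.
  rewrite sumR_split. f_equal. apply sumR_ext. intros; f_equal; lia.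
Qed.

Lemma ssum_telescope a b g : (a <= b + 1)%nat ->
  ssum a b (fun m => g (m + 1)%nat - g m) = g (b + 1)%nat - g a.
Proof.
  intros H. unfold ssum.
  replace (g (b + 1)%nat - g a) with (g (a + (S b - a))%nat - g (a + 0)%nat)
    by (f_equal; f_equal; lia).
  rewrite <- (sumR_telescope (S b - a) (fun l => g (a + l)%nat)).
  apply sumR_ext. intros; f_equal; f_equal; lia.
Qed.

Lemma ssum_single a b i F : (forall m, m <> i -> F m = 0) ->
  ssum a b F = if (Nat.leb a i && Nat.leb i b)%bool then F i else 0.
Proof.
  intros H. unfold ssum. rewrite (sumR_single _ _ (i - a)) by (intros; apply H; lia).
  destruct (Nat.leb_spec a i), (Nat.leb_spec i b), (Nat.ltb_spec (i - a) (S b - a));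
    simpl; try lia; try reflexivity; [f_equal; lia|apply H; lia].
Qed.

Lemma ssum_upd_out a b f th i t : (i < a \/ b < i)%nat ->
  ssum a b (fun m => f (upd th i t m)) = ssum a b (fun m => f (th m)).
Proof.
  intros Hi. apply ssum_ext. intros m Hm. unfold upd.
  destruct (Nat.eqb_spec m i); [lia|reflexivity].
Qed.

Lemma ssum_upd_in a b f th i t : (a <= i <= b)%nat ->
  ssum a b (fun m => f (upd th i t m)) = ssum a b (fun m => f (th m)) - f (th i) + f t.
Proof.
  intros Hi. unfold ssum.
  rewrite (sumR_ext _ _ (fun l => if Nat.eqb l (i - a) then f t else f (th (a + l)%nat))).
  - rewrite sumR_upd by lia. replace (a + (i - a))%nat with i by lia. reflexivity.
  - intros l Hl. unfold upd.
    destruct (Nat.eqb_spec (a + l) i), (Nat.eqb_spec l (i - a)); try lia; reflexivity.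
Qed.

Lemma ssum_upd0_mul a b i t h :
  ssum a b (fun m => upd (fun _ => 0) i t m * h m)
  = if (Nat.leb a i && Nat.leb i b)%bool then t * h i else 0.
Proof.
  rewrite (ssum_single a b i); unfold upd; [now rewrite Nat.eqb_refl|].
  intros m Hm. destruct (Nat.eqb_spec m i); [lia|ring].
Qed.

Lemma ssum_upd0 a b i t :
  ssum a b (upd (fun _ => 0) i t) = if (Nat.leb a i && Nat.leb i b)%bool then t else 0.
Proof.
  rewrite (ssum_ext a b _ (fun m => upd (fun _ => 0) i t m * 1)) by (intros; ring).
  rewrite ssum_upd0_mul. now rewrite Rmult_1_r.
Qed.

Lemma derivable_pt_lim_const_fun f c x : (forall t, f t = c) -> derivable_pt_lim f x 0.
Proof.
  intros H. apply is_derive_Reals, (is_derive_ext (fun _ => c)).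
  - intros t; symmetry; apply H.
  - apply is_derive_Reals, derivable_pt_lim_const.
Qed.

Lemma exp_geometric_sum k t :
  (1 - exp (- t)) * ssum 1 k (fun m => exp (INR m * t)) = exp (INR k * t) - 1.
Proof.
  rewrite <- ssum_scal.
  rewrite (ssum_ext 1 k _ (fun m => exp (INR (m + 1 - 1) * t) - exp (INR (m - 1) * t))).
  - rewrite (ssum_telescope 1 k (fun m => exp (INR (m - 1) * t))) by lia.
    replace (k + 1 - 1)%nat with k by lia. simpl INR. rewrite Rmult_0_l, exp_0. reflexivity.
  - intros m Hm. replace (m + 1 - 1)%nat with m by lia.
    rewrite minus_INR by lia. simpl INR.
    replace ((INR m - 1) * t) with (INR m * t + - t) by ring. rewrite exp_plus. ring.
Qed.

Ltac decide_leb :=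
  repeat match goal with
         | |- context [Nat.leb ?a ?b] => destruct (Nat.leb_spec a b); try lia
         end; cbn [andb].

Section Hamiltonian.
Variables (j k : nat) (beta gamma nu : R).
Hypothesis hk : (1 <= k)%nat.

Lemma Ham_y0 th : Ham j k beta gamma nu (fun _ => 0) th = 0.
Proof.
  unfold Ham.
  rewrite (ssum_ext 1 j _ (fun _ => 0)) by (intros; ring).
  rewrite (ssum_ext (j + 1) (j + k - 1) _ (fun _ => 0)) by (intros; ring).
  rewrite !ssum_const. ring.
Qed.

Lemma Ham_unit_latent i t th : (1 <= i <= j)%nat ->
  Ham j k beta gamma nu (upd (fun _ => 0) i t) th
  = INR j * nu * (t * (exp (- th i + th (i + 1)%nat) - 1)).
Proof.
  intros Hi. unfold Ham. rewrite !ssum_upd0, !ssum_upd0_mul.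
  replace (upd (fun _ => 0) i t (j + k)%nat) with 0
    by (unfold upd; destruct (Nat.eqb_spec (j + k) i); [lia|reflexivity]).
  decide_leb. ring.
Qed.

(* The convention th (j+k+1) = 0 lets the recovery term y_{j+k}(e^{-th_{j+k}} - 1)
   be read as one more step of the infectious chain. *)
Lemma Ham_unit_infectious i t th : (j + 1 <= i <= j + k)%nat -> th (j + k + 1)%nat = 0 ->
  Ham j k beta gamma nu (upd (fun _ => 0) i t) th
  = beta * t * (1 - t) * (exp (th 1%nat) - 1)
    + INR k * gamma * (t * (exp (- th i + th (i + 1)%nat) - 1)).
Proof.
  intros Hi Hend. unfold Ham. rewrite !ssum_upd0, !ssum_upd0_mul. unfold upd.
  destruct (Nat.eqb_spec (j + k) i) as [<-|Hne]; decide_leb.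
  - rewrite Hend, Rplus_0_r. ring.
  - ring.
Qed.

Lemma Ham_exp_profile (y th : nat -> R) (a : R) :
  (forall m, (1 <= m <= j)%nat -> y m = 0) ->
  (forall m, (j + 1 <= m <= j + k)%nat -> y m = a * exp (th m)) ->
  th (j + 1)%nat = th 1%nat ->
  let A := ssum (j + 1) (j + k) (fun m => exp (th m)) in
  Ham j k beta gamma nu y th
  = a * (exp (th 1%nat) - 1) * (beta * A * (1 - a * A) - INR k * gamma).
Proof.
  intros Hlat Hinf Hth A. unfold Ham.
  rewrite (ssum_split 1 j (j + k)) by lia.
  rewrite (ssum_ext 1 j y (fun _ => 0)) by (intros; apply Hlat; lia).
  rewrite (ssum_ext 1 j (fun m => y m * (exp (- th m + th (m + 1)%nat) - 1)) (fun _ => 0))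
    by (intros m Hm; rewrite Hlat by lia; ring).
  rewrite (ssum_ext (j + 1) (j + k) y (fun m => a * exp (th m))) by (intros; apply Hinf; lia).
  rewrite (ssum_ext (j + 1) (j + k - 1) _
             (fun m => a * (exp (th (m + 1)%nat) - exp (th m)))).
  2:{ intros m Hm. rewrite Hinf by lia. rewrite exp_plus, exp_Ropp.
      field. apply Rgt_not_eq, exp_pos. }
  pose proof (ssum_telescope (j + 1) (j + k - 1) (fun m => exp (th m)) ltac:(lia)) as Htel.
  cbv beta in Htel. rewrite !ssum_scal, Htel. fold A.
  replace (j + k - 1 + 1)%nat with (j + k)%nat by lia.
  rewrite Hinf by lia. rewrite Hth, exp_Ropp, !ssum_const.
  field. apply Rgt_not_eq, exp_pos.
Qed.

Lemma Stilde_partial_latent th i x : (i < j + 1)%nat ->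
  derivable_pt_lim (fun t => Stilde j k beta gamma (upd th i t)) x 0.
Proof.
  intros Hi. apply (derivable_pt_lim_const_fun _ (Stilde j k beta gamma th)).
  intros t. unfold Stilde. rewrite (ssum_upd_out _ _ exp) by lia. reflexivity.
Qed.

Lemma Stilde_partial_infectious th i : beta <> 0 -> (j + 1 <= i <= j + k)%nat ->
  let A := ssum (j + 1) (j + k) (fun m => exp (th m)) in
  derivable_pt_lim (fun t => Stilde j k beta gamma (upd th i t)) (th i)
    ((1 - gamma * INR k / (beta * A)) / A * exp (th i)).
Proof.
  intros Hb Hi A.
  assert (Hk : 0 < INR k) by (apply lt_0_INR; lia).
  assert (HA : 0 < A) by (apply sumR_pos; [lia|intros; apply exp_pos]).
  apply is_derive_Reals.
  eapply is_derive_ext.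
  { intros t. unfold Stilde. rewrite (ssum_upd_in (j + 1) (j + k) exp th i t) by lia. reflexivity. }
  fold A. auto_derive.
  - replace (A - exp (th i) + exp (th i)) with A by ring.
    repeat split; [|lra]. apply Rmult_lt_0_compat; [apply Rinv_0_lt_compat|]; lra.
  - replace (A - exp (th i) + exp (th i)) with A by ring. field. lra.
Qed.

Lemma Ham_Stilde_gradient (th y : nat -> R) : beta <> 0 ->
  (forall m, (1 <= m <= j + 1)%nat -> th m = th 1%nat) ->
  (forall i, (1 <= i <= j + k)%nat ->
     derivable_pt_lim (fun t => Stilde j k beta gamma (upd th i t)) (th i) (y i)) ->
  Ham j k beta gamma nu y th = 0.
Proof.
  intros Hb Hth Hy.
  set (A := ssum (j + 1) (j + k) (fun m => exp (th m))).
  assert (HA : 0 < A) by (apply sumR_pos; [lia|intros; apply exp_pos]).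
  set (c := 1 - gamma * INR k / (beta * A)).
  rewrite (Ham_exp_profile y th (c / A)).
  - fold A. unfold c. field. split; lra.
  - intros m Hm. apply (uniqueness_limite _ _ _ _ (Hy m ltac:(lia))).
    apply Stilde_partial_latent. lia.
  - intros m Hm. apply (uniqueness_limite _ _ _ _ (Hy m ltac:(lia))).
    apply Stilde_partial_infectious; [exact Hb|lia].
  - apply Hth. lia.
Qed.

End Hamiltonian.

Section ThetaStar.
Variables (j k : nat) (ts : R).

Lemma theta_star_latent_step i : (i <= j)%nat ->
  theta_star j k ts (i + 1)%nat = theta_star j k ts i.
Proof. intros Hi. unfold theta_star. decide_leb. reflexivity. Qed.

Lemma theta_star_infectious_step i : (j + 1 <= i <= j + k)%nat ->
  theta_star j k ts i = ts + theta_star j k ts (i + 1)%nat.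
Proof.
  intros Hi. unfold theta_star. decide_leb.
  - replace i with (j + 1)%nat by lia.
    replace (j + k + 1 - (j + 1 + 1))%nat with (k - 1)%nat by lia.
    rewrite minus_INR by lia. simpl INR. ring.
  - replace (j + k + 1 - i)%nat with (S (j + k + 1 - (i + 1))) by lia.
    rewrite S_INR. ring.
Qed.

Lemma theta_star_end : theta_star j k ts (j + k + 1)%nat = 0.
Proof.
  unfold theta_star. decide_leb.
  - replace k with O by lia. simpl; ring.
  - rewrite Nat.sub_diag. simpl; ring.
Qed.

Lemma theta_star_1 : theta_star j k ts 1%nat = INR k * ts.
Proof. unfold theta_star. decide_leb. reflexivity. Qed.

Lemma ssum_theta_star f :
  ssum (j + 1) (j + k) (fun m => f (theta_star j k ts m))
  = ssum 1 k (fun m => f (INR m * ts)).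
Proof.
  unfold ssum. replace (S (j + k) - (j + 1))%nat with k by lia.
  replace (S k - 1)%nat with k by lia. rewrite (sumR_rev k (fun i => f (INR (1 + i) * ts))).
  apply sumR_ext. intros l Hl. unfold theta_star. f_equal.
  destruct (Nat.leb_spec (j + 1 + l) (j + 1)); f_equal; f_equal; lia.
Qed.

End ThetaStar.

Lemma theta_star_balance k beta gamma ts : beta <> 0 ->
  beta / (INR k * gamma) * ssum 1 k (fun m => exp (INR m * ts)) = 1 ->
  beta * (exp (INR k * ts) - 1) + INR k * gamma * (exp (- ts) - 1) = 0.
Proof.
  intros Hb hts.
  set (G := ssum 1 k (fun m => exp (INR m * ts))) in *.
  assert (HkG : INR k * gamma = beta * G).
  { assert (INR k * gamma <> 0) by (intros E; rewrite E, Rdiv_0_r, Rmult_0_l in hts; lra).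
    rewrite <- (Rmult_1_r (INR k * gamma)), <- hts. field. split; intros E; rewrite E in *; lra. }
  rewrite <- exp_geometric_sum, HkG. fold G. ring.
Qed.

Lemma theta_star_equilibrium j k beta gamma nu ts :
  (1 <= k)%nat -> beta <> 0 ->
  beta / (INR k * gamma) * ssum 1 k (fun m => exp (INR m * ts)) = 1 ->
  forall i, (1 <= i <= j + k)%nat ->
     derivable_pt_lim
       (fun t => Ham j k beta gamma nu (upd (fun _ => 0) i t) (theta_star j k ts)) 0 0
     /\
     derivable_pt_lim
       (fun t => Ham j k beta gamma nu (fun _ => 0) (upd (theta_star j k ts) i t))
       (theta_star j k ts i) 0.
Proof.
  intros hk hb hts i Hi. split.
  2:{ apply (derivable_pt_lim_const_fun _ 0). intros; apply Ham_y0. }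
  destruct (Nat.le_gt_cases i j) as [Hlat|Hinf].
  - apply (derivable_pt_lim_const_fun _ 0). intros t.
    rewrite Ham_unit_latent, theta_star_latent_step by lia.
    rewrite Rplus_opp_l, exp_0. ring.
  - apply is_derive_Reals. eapply is_derive_ext.
    { intros t. symmetry.
      rewrite Ham_unit_infectious by (lia || apply theta_star_end).
      rewrite (theta_star_infectious_step j k ts i), theta_star_1 by lia.
      replace (- (ts + theta_star j k ts (i + 1)%nat) + theta_star j k ts (i + 1)%nat)
        with (- ts) by ring.
      reflexivity. }
    pose proof (theta_star_balance k beta gamma ts hb hts) as Hbalance.
    auto_derive; [exact I|lra].
Qed.

Lemma Stilde_theta_star_increment j k beta gamma ts :
  (1 <= k)%nat -> 0 < beta -> 0 < gamma ->
  beta / (INR k * gamma) * ssum 1 k (fun m => exp (INR m * ts)) = 1 ->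
  Stilde j k beta gamma (theta_star j k ts) - Stilde j k beta gamma (fun _ => 0)
    = 1 - 1 / (beta / gamma) - ln (beta / gamma).
Proof.
  intros hk hb hg hts.
  assert (Hk : 0 < INR k) by (apply lt_0_INR; lia).
  assert (Hstar : ssum (j + 1) (j + k) (fun m => exp (theta_star j k ts m))
                  = INR k * gamma / beta).
  { rewrite (ssum_theta_star j k ts exp).
    apply (Rmult_eq_reg_l (beta / (INR k * gamma))); [rewrite hts; field; lra|].
    apply Rgt_not_eq, Rdiv_lt_0_compat; [lra|nra]. }
  assert (Hzero : ssum (j + 1) (j + k) (fun m => exp ((fun _ => 0) m)) = INR k).
  { rewrite exp_0, ssum_const. replace (S (j + k) - (j + 1))%nat with k by lia. ring. }
  unfold Stilde. rewrite Hstar, Hzero.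
  replace (/ INR k * (INR k * gamma / beta)) with (/ (beta / gamma)) by (field; lra).
  rewrite ln_Rinv by (apply Rdiv_lt_0_compat; lra).
  rewrite Rinv_l, ln_1 by lra. field. lra.
Qed.

Theorem mainTheorem3 (j k : nat) (beta gamma nu : R)
  (hj : (1 <= j)%nat) (hk : (1 <= k)%nat)
  (hb : 0 < beta) (hg : 0 < gamma) (hn : 0 < nu) (hR0 : 1 < beta / gamma)
  (ts : R)
  (hts : beta / (INR k * gamma) * ssum 1 k (fun m => exp (INR m * ts)) = 1) :
  (forall (th y : nat -> R),
     (forall m, (1 <= m <= j + 1)%nat -> th m = th 1%nat) ->
     (forall i, (1 <= i <= j + k)%nat ->
        derivable_pt_lim (fun t => Stilde j k beta gamma (upd th i t)) (th i) (y i)) ->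
     Ham j k beta gamma nu y th = 0)
  /\
  (forall i, (1 <= i <= j + k)%nat ->
     derivable_pt_lim
       (fun t => Ham j k beta gamma nu (upd (fun _ => 0) i t) (theta_star j k ts)) 0 0
     /\
     derivable_pt_lim
       (fun t => Ham j k beta gamma nu (fun _ => 0) (upd (theta_star j k ts) i t))
       (theta_star j k ts i) 0)
  /\
  Stilde j k beta gamma (theta_star j k ts) - Stilde j k beta gamma (fun _ => 0)
    = 1 - 1 / (beta / gamma) - ln (beta / gamma).
Proof.
  assert (hb0 : beta <> 0) by lra.
  split; [|split].
  - intros th y. apply Ham_Stilde_gradient; assumption.
  - apply theta_star_equilibrium; assumption.
  - apply Stilde_theta_star_increment; assumption.
Qed.
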